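(* Let $\Delta\ge 4$ be an integer and let $c_1,\dots,c_\Delta$ be defined by $c_\Delta=\frac{1}{\Delta}$ and $ic_i+c_{i+1}=1$ for $i=1,\dots,\Delta-1$. Then: (a) $\frac{1}{i+1}<c_i=\frac{1}{i+1}+\frac{c_{i+2}}{i(i+1)}$ for $1\le i\le \Delta-2$, and $c_i<\frac{i+1}{i(i+2)}$ for $1\le i\le \Delta-3$; (b) $c_{i+1}<c_i$ for $i=1,\dots,\Delta-2$; (c) if $i\le \Delta-2$ and $i\equiv \Delta \pmod 2$, then $$c_i=\frac{1}{i+1}+\sum_{j=1}^{\frac{\Delta-i-2}{2}}\frac{i+2j}{i(i+1)\cdots(i+2j+1)}+\frac{1}{i(i+1)\cdots\Delta};$$ (d) if $i\le \Delta-3$ and $i\equiv \Delta-1 \pmod 2$, then $$c_i=\frac{1}{i+1}+\sum_{j=1}^{\frac{\Delta-i-3}{2}}\frac{i+2j}{i(i+1)\cdots(i+2j+1)}+\frac{\Delta-1}{i(i+1)\cdots\Delta}.$$ (Here $i$ ranges over positive integers, and an empty sum equals $0$.) *)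

From mathcomp Require Import all_boot all_order all_algebra.
Set Implicit Arguments. Unset Strict Implicit. Unset Printing Implicit Defensive.
Import Order.TTheory GRing.Theory Num.Theory.
Local Open Scope ring_scope.

Definition rprod (R : ringType) (a b : nat) : R := \prod_(a <= k < b.+1) (k%:R : R).

From mathcomp Require Import all_boot all_order all_algebra.
From mathcomp Require Import ring lra zify.
Import Order.TTheory GRing.Theory Num.Theory.
Local Open Scope ring_scope.

(* Eliminating c_(i+1) between two consecutive instances of the recurrence
   gives c_i = 1/(i+1) + c_(i+2)/(i(i+1)).  As c_(D-1) = c_D = 1/D > 0, downward
   induction along this relation makes every c_i positive, which is the lower
   bound of (a); substituting it back into i c_i + c_(i+1) = 1 gives (b) and the
   upper bound.  Unfolding the two-step relation telescopes into the sums of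
   (c) and (d), the remainder being c_D or c_(D-1) according to the parity of
   D - i. *)

Lemma rprodnn (R : nzRingType) a : rprod R a a = a%:R.
Proof. by rewrite /rprod big_nat1. Qed.

Lemma rprodSr (R : nzRingType) a b : (a <= b.+1)%N ->
  rprod R a b.+1 = rprod R a b * b.+1%:R.
Proof. by move=> ab; rewrite /rprod big_nat_recr. Qed.

Lemma rprod_predr (R : nzRingType) a b : (0 < b)%N -> (a <= b)%N ->
  rprod R a b = rprod R a b.-1 * b%:R.
Proof. by move=> b_gt0 ab; rewrite -[in LHS](prednK b_gt0) rprodSr prednK. Qed.

Lemma rprod_gt0 (R : numDomainType) a b : (0 < a)%N -> 0 < rprod R a b.
Proof.
move=> a_gt0; rewrite /rprod big_nat_cond; apply: prodr_gt0 => k /andP[/andP[ak _] _].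
by rewrite ltr0n (leq_trans a_gt0 ak).
Qed.

Section Coefficients.

Context {R : realFieldType} {D : nat} {c : nat -> R}.
Hypothesis D_gt1 : (1 < D)%N.
Hypothesis cD : c D = 1 / D%:R.
Hypothesis c_rec : forall i, (1 <= i <= D - 1)%N -> i%:R * c i + c i.+1 = 1.

Lemma c_succ i : (1 <= i <= D - 1)%N -> c i.+1 = 1 - i%:R * c i.
Proof. by move=> hi; apply/eqP; rewrite eq_sym subr_eq addrC c_rec. Qed.

Lemma c_step2 i : (1 <= i <= D - 2)%N ->
  c i = 1 / i.+1%:R + c i.+2 / (i%:R * i.+1%:R).
Proof.
move=> hi; rewrite c_succ ?c_succ; [|lia|lia].
have i_neq0 : i%:R != 0 :> R by rewrite pnatr_eq0; lia.
have i1_neq0 : i%:R + 1 != 0 :> R by rewrite natr1 pnatr_eq0.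
by rewrite -natr1; field; rewrite i_neq0 i1_neq0.
Qed.

Lemma c_pred_last : c D.-1 = 1 / D%:R.
Proof.
have D_gt0 : (0 < D)%N by lia.
have D1_neq0 : D.-1%:R != 0 :> R by rewrite pnatr_eq0; lia.
have D_neq0 : D.-1%:R + 1 != 0 :> R by rewrite natr1 prednK // pnatr_eq0; lia.
have : (1 <= D.-1 <= D - 1)%N by lia.
move=> /c_rec; rewrite prednK // cD -[D in 1 / D%:R]prednK // -natr1.
move=> /(canRL (addrK _)) /(canRL (mulKf D1_neq0)) ->.
by field; rewrite D1_neq0 D_neq0.
Qed.

Lemma c_gt0 k : (1 <= k <= D)%N -> 0 < c k.
Proof.
have [m] := ubnP (D - k); elim: m k => // m IH k hm hk.
have [k_le | k_gt] := leqP k (D - 2).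
  rewrite c_step2; last lia.
  by rewrite addr_gt0 ?divr_gt0 ?mulr_gt0 ?ltr0n //; [apply: IH|]; lia.
have [-> | k_neqD] := eqVneq k D; first by rewrite cD divr_gt0 ?ltr0n //; lia.
have -> : k = D.-1 by lia.
by rewrite c_pred_last divr_gt0 ?ltr0n //; lia.
Qed.

Lemma inv_succ_lt_c k : (1 <= k <= D - 2)%N -> 1 / k.+1%:R < c k.
Proof.
move=> hk; rewrite c_step2 // ltrDl divr_gt0 ?mulr_gt0 ?ltr0n //; last lia.
by apply: c_gt0; lia.
Qed.

Lemma c_lt_succ_div k : (1 <= k <= D - 3)%N -> c k < k.+1%:R / (k%:R * k.+2%:R).
Proof.
move=> hk; have k_gt0 : 0 < k%:R :> R by rewrite ltr0n; lia.
have k2_neq0 : k%:R + 1 + 1 != 0 :> R by rewrite !natr1 pnatr_eq0.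
rewrite -(ltr_pM2l k_gt0) (_ : _ * (_ / _) = 1 - 1 / k.+2%:R); last first.
  by rewrite -!natr1; field; rewrite k2_neq0 gt_eqF.
by rewrite ltrBrDr -ltrBrDl -c_succ ?inv_succ_lt_c //; lia.
Qed.

Lemma c_succ_lt k : (1 <= k <= D - 2)%N -> c k.+1 < c k.
Proof.
move=> hk; have := inv_succ_lt_c _ hk.
rewrite c_succ; last lia.
rewrite ltr_pdivrMr ?ltr0n // -natr1; lra.
Qed.

Lemma c_div_rprod_step i p : (0 < i <= p)%N -> (p.+3 <= D)%N ->
  c p.+1 / rprod R i p = p.+1%:R / rprod R i p.+2 + c p.+3 / rprod R i p.+2.
Proof.
move=> /andP[i_gt0 ip] pD.
have P_neq0 : rprod R i p != 0 by rewrite gt_eqF ?rprod_gt0.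
rewrite c_step2; last lia.
rewrite !rprodSr; try lia.
by rewrite -[p.+2%:R]natr1; field; rewrite !nat1r natr1 !pnatr_eq0 P_neq0.
Qed.

Lemma c_expand n i : (0 < i)%N -> (i + 2 * n + 2 <= D)%N ->
  c i = 1 / i.+1%:R
        + \sum_(1 <= j < n.+1) (i + 2 * j)%:R / rprod R i (i + 2 * j + 1)
        + c (i + 2 * n + 2) / rprod R i (i + 2 * n + 1).
Proof.
move=> i_gt0; elim: n => [|n IH] hn.
  rewrite big_geq // addr0 muln0 addn0 addn1 addn2 rprodSr // rprodnn.
  by apply: c_step2; lia.
rewrite IH; last lia.
rewrite [in RHS]big_nat_recr //= -!addrA; congr (_ + (_ + _)).
set p := (i + 2 * n + 1)%N.
have -> : (i + 2 * n + 2 = p.+1)%N by lia.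
have -> : (i + 2 * n.+1 + 2 = p.+3)%N by lia.
have -> : (i + 2 * n.+1 + 1 = p.+2)%N by lia.
have -> : (i + 2 * n.+1 = p.+1)%N by lia.
by apply: c_div_rprod_step; lia.
Qed.

Lemma c_closed_even i : (1 <= i <= D - 2)%N -> ~~ odd (D - i) ->
  c i = 1 / i.+1%:R
        + \sum_(1 <= j < ((D - i - 2) %/ 2).+1)
            (i + 2 * j)%:R / rprod R i (i + 2 * j + 1)
        + 1 / rprod R i D.
Proof.
move=> hi /negbTE D_i_even.
have D_i_mod2 : ((D - i) %% 2 = 0)%N by rewrite modn2 D_i_even.
rewrite (c_expand ((D - i - 2) %/ 2)); [|lia|lia].
have -> : (i + 2 * ((D - i - 2) %/ 2) + 2 = D)%N by lia.
have -> : (i + 2 * ((D - i - 2) %/ 2) + 1 = D.-1)%N by lia.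
have P_neq0 : rprod R i D.-1 != 0 by rewrite gt_eqF ?rprod_gt0 //; lia.
have D_neq0 : D%:R != 0 :> R by rewrite pnatr_eq0; lia.
rewrite cD (@rprod_predr _ i D); [|lia|lia].
by congr (_ + _); field; rewrite P_neq0 D_neq0.
Qed.

Lemma c_closed_odd i : (1 <= i <= D - 3)%N -> odd (D - i) ->
  c i = 1 / i.+1%:R
        + \sum_(1 <= j < ((D - i - 3) %/ 2).+1)
            (i + 2 * j)%:R / rprod R i (i + 2 * j + 1)
        + (D - 1)%:R / rprod R i D.
Proof.
move=> hi D_i_odd.
have D_i_mod2 : ((D - i) %% 2 = 1)%N by rewrite modn2 D_i_odd.
rewrite (c_expand ((D - i - 3) %/ 2)); [|lia|lia].
have -> : (i + 2 * ((D - i - 3) %/ 2) + 2 = D.-1)%N by lia.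
have -> : (i + 2 * ((D - i - 3) %/ 2) + 1 = D.-2)%N by lia.
have P_neq0 : rprod R i D.-2 != 0 by rewrite gt_eqF ?rprod_gt0 //; lia.
have D_neq0 : D%:R != 0 :> R by rewrite pnatr_eq0; lia.
have D1_neq0 : D.-1%:R != 0 :> R by rewrite pnatr_eq0; lia.
rewrite c_pred_last subn1 (@rprod_predr _ i D) ?(@rprod_predr _ i D.-1); try lia.
by congr (_ + _); field; rewrite P_neq0 D_neq0 D1_neq0.
Qed.

End Coefficients.

Theorem lemma1 (R : realFieldType) (D : nat) (c : nat -> R)
  (hD : (4 <= D)%N)
  (hcD : c D = 1 / D%:R)
  (hrec : forall i : nat, (1 <= i <= D - 1)%N -> i%:R * c i + c i.+1 = 1) :
  (* (a) *)
  (forall i : nat, (1 <= i <= D - 2)%N ->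
     1 / (i.+1)%:R < c i /\
     c i = 1 / (i.+1)%:R + c i.+2 / (i%:R * (i.+1)%:R)) /\
  (forall i : nat, (1 <= i <= D - 3)%N ->
     c i < (i.+1)%:R / (i%:R * (i.+2)%:R)) /\
  (* (b) *)
  (forall i : nat, (1 <= i <= D - 2)%N -> c i.+1 < c i) /\
  (* (c) *)
  (forall i : nat, (1 <= i <= D - 2)%N -> ~~ odd (D - i) ->
     c i = 1 / (i.+1)%:R
           + \sum_(1 <= j < ((D - i - 2) %/ 2).+1)
               (i + 2 * j)%:R / rprod R i (i + 2 * j + 1)
           + 1 / rprod R i D) /\
  (* (d) *)
  (forall i : nat, (1 <= i <= D - 3)%N -> odd (D - i) ->
     c i = 1 / (i.+1)%:R
           + \sum_(1 <= j < ((D - i - 3) %/ 2).+1)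
               (i + 2 * j)%:R / rprod R i (i + 2 * j + 1)
           + (D - 1)%:R / rprod R i D).
Proof.
have D_gt1 : (1 < D)%N by lia.
split=> [i hi|].
  by split; [exact: inv_succ_lt_c D_gt1 hcD hrec i hi | exact: c_step2 hrec i hi].
split=> [i hi|]; first exact: c_lt_succ_div D_gt1 hcD hrec i hi.
split=> [i hi|]; first exact: c_succ_lt D_gt1 hcD hrec i hi.
split=> [i hi|]; first exact: c_closed_even D_gt1 hcD hrec i hi.
exact: c_closed_odd D_gt1 hcD hrec.
Qed.
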